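(* Let $K$ be a field with $\operatorname{char}(K)=0$ and let $f\in K[x]$ have at least two distinct critical points and equal critical values at at most two distinct critical points. Suppose $f(x)=g(h(x))$ with $g,h\in K[x]$ and $t=\deg g>1$, and put $k=\deg h$. Then either $k\leq 2$, or \[ f'(x)=a'(x-x_0)^{k_0t-1}(x-x_1)^{k_1t-1}(kx-k_0x_1-k_1x_0) \] for some $a'\in K$, integers $k_0,k_1\geq 1$ with $k_0+k_1=k\geq 3$ and distinct $x_0,x_1\in\overline{K}$, or \[ f'(x)=a'(x-x_0)^{2t_0+1}(x-x_1)^{t_0}(x-y_0)^{2t_1+1}(x-y_1)^{t_1} \] with $a'\in K$, $\deg h=3$, integers $t_0,t_1\geq 1$ with $t_0+t_1=t-1$, and distinct $x_0,x_1,y_0,y_1\in\overline{K}$ satisfying $3x_0-y_0=2y_1$ and $3y_0-x_0=2x_1$.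
   Context: Critical points of $f$ are the roots of $f'$ in an algebraic closure $\overline{K}$, and critical values are values of $f$ at critical points. ''$f$ has equal critical values at at most two distinct critical points'' means there do not exist three pairwise distinct critical points $\beta_1,\beta_2,\beta_3$ of $f$ with $f(\beta_1)=f(\beta_2)=f(\beta_3)$. *)

From HB Require Import structures.
From mathcomp Require Import all_boot all_order all_algebra.
Set Implicit Arguments. Unset Strict Implicit. Unset Printing Implicit Defensive.
Import Order.TTheory GRing.Theory Num.Theory.
Local Open Scope ring_scope.

Definition critical (K : fieldType) (L : closedFieldType)
  (iota : {rmorphism K -> L}) (f : {poly K}) (b : L) : bool :=
  root (map_poly iota f^`()) b.

From HB Require Import structures.
From mathcomp Require Import all_boot all_order all_algebra.
From mathcomp Require Import ring zify.

Set Implicit Arguments.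
Unset Strict Implicit.
Unset Printing Implicit Defensive.

Import Order.TTheory GRing.Theory Num.Theory.
Local Open Scope ring_scope.

(* Write F = G \Po H over an algebraically closed field of characteristic 0, so that
   F' = (G' \Po H) * H'. For a root b of G', every point of the fibre H = b is a critical
   point of F with critical value G(b), so the fibre has at most two points, i.e.
   H - b = c (X - x0)^n0 (X - x1)^n1 with n0 + n1 = k. Hence gcd(H - b, H') has degree
   at least k - 2. These gcds are pairwise coprime divisors of H', which has degree k - 1;
   for k >= 3 this leaves room for at most two roots of G', and for two only when k = 3 and
   both fibres have shape (X - u)^2 (X - v). One root b0 of G' gives the first formula
   (the fibre over b0 must have two points, else F has a single critical point); two roots
   give the second, the relations between the four points coming from
   H' = c (X - u0)(3X - 2v0 - u0) = c (X - u1)(3X - 2v1 - u1). *)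

Definition at_most_two {T : eqType} (P : pred T) :=
  forall x y z, P x -> P y -> P z -> [|| x == y, x == z | y == z].

Lemma at_most_two_sub (T : eqType) (P Q : pred T) :
  at_most_two Q -> {subset P <= Q} -> at_most_two P.
Proof. by move=> Q2 PQ x y z /PQ Px /PQ Py /PQ Pz; apply: Q2. Qed.

Lemma root_subC (R : nzRingType) (p : {poly R}) b x : root (p - b%:P) x = (p.[x] == b).
Proof. by rewrite rootE hornerD hornerN hornerC subr_eq0. Qed.

Lemma prod_XsubC_two_values (R : idomainType) (x0 x1 : R) (rs : seq R) :
  x0 != x1 -> all [pred z | (z == x0) || (z == x1)] rs ->
  \prod_(z <- rs) ('X - z%:P) =
    ('X - x0%:P) ^+ count_mem x0 rs * ('X - x1%:P) ^+ count_mem x1 rs.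
Proof.
move=> x01; elim: rs => [|z rs IHrs] /=; first by rewrite big_nil mulr1.
case/andP=> /orP[]/eqP-> /IHrs {}IHrs; rewrite big_cons IHrs eqxx.
  by rewrite (negPf x01) add1n exprS mulrA.
by rewrite eq_sym (negPf x01) add1n exprS mulrCA.
Qed.

(* [x1] need not be a root of [p], in which case [n1 = 0]. *)
Lemma closed_poly_two_roots (L : closedFieldType) (p : {poly L}) :
  (1 < size p)%N -> at_most_two (root p) ->
  exists x0 x1 n0 n1, [/\ x0 != x1, (0 < n0)%N, (n0 + n1 = (size p).-1)%N &
    p = lead_coef p *: (('X - x0%:P) ^+ n0 * ('X - x1%:P) ^+ n1)].
Proof.
move=> sp_gt1 roots2.
have lc_neq0 : lead_coef p != 0 by rewrite lead_coef_eq0 -size_poly_gt0 ltnW.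
have [rs def_p] := closed_field_poly_normal p.
have root_p z : root p z = (z \in rs) by rewrite def_p rootZ // root_prod_XsubC.
case: rs def_p root_p => [|x0 rs] def_p root_p.
  by move: sp_gt1; rewrite def_p big_nil size_scale // size_poly1.
have [x1 x01 cover] :
    exists2 x1, x0 != x1 & all [pred z | (z == x0) || (z == x1)] (x0 :: rs).
  have [/allP all_x0 | /allPn[x1 x1_rs /= x1_neq_x0]] := boolP (all (pred1 x0) (x0 :: rs)).
    exists (x0 + 1); last by apply/allP => z /all_x0 /= ->.
    by rewrite -subr_eq0 opprD addrA subrr sub0r oppr_eq0 oner_eq0.
  exists x1; first by rewrite eq_sym.
  rewrite eqxx /=; apply/allP => z z_rs /=; rewrite !(eq_sym z).
  have := roots2 x0 x1 z; rewrite !root_p mem_head x1_rs inE z_rs orbT eq_sym.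
  by rewrite (negPf x1_neq_x0); apply.
rewrite (prod_XsubC_two_values x01 cover) in def_p.
exists x0, x1, (count_mem x0 (x0 :: rs)), (count_mem x1 (x0 :: rs)); split=> //.
- by rewrite /= eqxx.
- rewrite [in RHS]def_p size_scale // size_mul ?expf_neq0 ?polyXsubC_eq0 //.
  by rewrite !size_exp_XsubC addSn addnS.
Qed.

Lemma size_deriv_pchar0 (R : idomainType) (p : {poly R}) :
  [pchar R] =i pred0 -> size p^`() = (size p).-1.
Proof.
move=> /pcharf0P char0.
have [/size1_polyC -> | sp_gt1] := leqP (size p) 1.
  by rewrite derivC size_poly0 size_polyC; case: eqP.
have p_neq0 : p != 0 by rewrite -size_poly_gt0 ltnW.
rewrite /deriv size_poly_eq //.
have -> : (size p).-2.+1 = (size p).-1 by case: (size p) sp_gt1 => [|[]].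
rewrite -mulr_natr mulf_neq0 //; first by rewrite lead_coef_eq0.
by rewrite char0 -lt0n ltn_predRL.
Qed.

Lemma dvdp_deriv_XsubC_exp2 (F : fieldType) (x0 x1 : F) (n0 n1 : nat) :
  ('X - x0%:P) ^+ n0.-1 * ('X - x1%:P) ^+ n1.-1
    %| (('X - x0%:P) ^+ n0 * ('X - x1%:P) ^+ n1)^`().
Proof.
have dvd_pred (x : F) n : ('X - x%:P) ^+ n.-1 %| ('X - x%:P) ^+ n.
  exact/dvdp_exp2l/leq_pred.
rewrite derivM !deriv_exp !derivXsubC !mul1r mulrnAl mulrnAr.
rewrite -(mulr_natr _ n0) -(mulr_natr _ n1).
by apply: dvdp_add; apply: dvdp_mulr; apply: dvdp_mul.
Qed.

Lemma size_gcdp_deriv_XsubC_exp2 (F : fieldType) (p : {poly F}) c x0 x1 n0 n1 :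
  c != 0 -> p = c *: (('X - x0%:P) ^+ n0 * ('X - x1%:P) ^+ n1) ->
  (n0.-1 + n1.-1 < size (gcdp p p^`()))%N.
Proof.
move=> c_neq0 def_p.
set E := ('X - x0%:P) ^+ n0.-1 * ('X - x1%:P) ^+ n1.-1.
have E_dvd_p : E %| p.
  by rewrite def_p dvdpZr // dvdp_mul // dvdp_exp2l // leq_pred.
have E_dvd_p' : E %| p^`() by rewrite def_p derivZ dvdpZr // dvdp_deriv_XsubC_exp2.
have p_neq0 : p != 0.
  by rewrite def_p scaler_eq0 negb_or c_neq0 mulf_neq0 // expf_neq0 // polyXsubC_eq0.
have gcd_neq0 : gcdp p p^`() != 0 by rewrite gcdp_eq0 negb_and p_neq0.
have E_dvd_gcd : E %| gcdp p p^`() by rewrite dvdp_gcd E_dvd_p.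
have := dvdp_leq gcd_neq0 E_dvd_gcd.
by rewrite size_mul ?expf_neq0 ?polyXsubC_eq0 // !size_exp_XsubC addSn addnS.
Qed.

Lemma coprimep_subC (F : fieldType) (p : {poly F}) b0 b1 :
  b0 != b1 -> coprimep (p - b0%:P) (p - b1%:P).
Proof.
move=> b01; have := coprimep_comp_poly p (coprimep_XsubC2 (_ : b1 - b0 != 0)).
by rewrite !comp_polyB comp_polyX !comp_polyC subr_eq0 eq_sym; apply.
Qed.

Lemma size_mul_coprime_dvdp (F : fieldType) (p d1 d2 : {poly F}) :
  p != 0 -> coprimep d1 d2 -> d1 %| p -> d2 %| p -> (size (d1 * d2)%R <= size p)%N.
Proof.
by move=> p_neq0 d12 d1p d2p; apply: dvdp_leq p_neq0 _; rewrite Gauss_dvdp // d1p.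
Qed.

Lemma deriv_XsubC_exp2 (R : comNzRingType) (x0 x1 : R) (n0 n1 : nat) :
  (0 < n0)%N -> (0 < n1)%N ->
  (('X - x0%:P) ^+ n0 * ('X - x1%:P) ^+ n1)^`() =
    ('X - x0%:P) ^+ (n0 - 1) * ('X - x1%:P) ^+ (n1 - 1)
    * ((n0 + n1)%:R *: 'X - (n0%:R * x1 + n1%:R * x0)%:P).
Proof.
case: n0 => // m0 _; case: n1 => // m1 _; rewrite !subSS !subn0.
rewrite derivM !deriv_exp !derivXsubC !mul1r /= -mul_polyC polyCD !polyCM.
rewrite !polyC_natr !exprS; move: (_ ^+ m0) (_ ^+ m1) => A B.
by move: ('X : {poly R}) (x0%:P) (x1%:P) => X a b; ring.
Qed.


Lemma deriv_comp_one_critical_point (R : comNzRingType) (G H : {poly R})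
    (a b c x0 x1 : R) (t n0 n1 : nat) :
  (0 < t)%N -> (0 < n0)%N -> (0 < n1)%N ->
  G^`() = a *: ('X - b%:P) ^+ t.-1 ->
  H - b%:P = c *: (('X - x0%:P) ^+ n0 * ('X - x1%:P) ^+ n1) ->
  (G \Po H)^`() =
    (a * c ^+ t) *: (('X - x0%:P) ^+ (n0 * t - 1) * ('X - x1%:P) ^+ (n1 * t - 1)
                     * ((n0 + n1)%:R *: 'X - (n0%:R * x1 + n1%:R * x0)%:P)).
Proof.
case: t => // t _ n0_gt0 n1_gt0 dG dH.
rewrite deriv_comp -[H^`()]subr0 -(derivC b) -derivB dH derivZ deriv_XsubC_exp2 //.
rewrite dG comp_polyZ rmorphXn rmorphB /= comp_polyX comp_polyC dH.
have pow_split n : (0 < n)%N -> (n * t.+1 - 1 = n * t + (n - 1))%N.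
  by case: n => // n _; rewrite mulSn mulnS; lia.
rewrite !pow_split // !exprD exprZn exprMn -!exprM exprS -!mul_polyC !polyCM polyC_exp.
move: (_%:P * 'X - _) (_ ^+ (n0 - 1)) (_ ^+ (n1 - 1)) => M A B.
by move: (_ ^+ (n0 * t)) (_ ^+ (n1 * t)) => P Q; ring.
Qed.

Lemma deriv_cubic_double_root (F : fieldType) (H : {poly F}) (b c u v : F) :
  H - b%:P = c *: (('X - u%:P) ^+ 2 * ('X - v%:P)) ->
  H^`() = c *: (('X - u%:P) * (3 *: 'X - (2 * v + u)%:P)).
Proof.
move=> dH; rewrite -[H^`()]subr0 -(derivC b) -derivB dH derivZ; congr (_ *: _).
rewrite derivM deriv_exp !derivXsubC (polyCD (2 * v)) polyCM -mul_polyC !polyC_natr.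
by move: 'X (u%:P) (v%:P) => X U V /=; ring.
Qed.

Lemma cubic_fibre_horner (F : fieldType) (H : {poly F}) (b c u v : F) :
  H - b%:P = c *: (('X - u%:P) ^+ 2 * ('X - v%:P)) -> H.[u] = b /\ H.[v] = b.
Proof.
move=> dH; have Hz z : H.[z] - b = c * ((z - u) ^+ 2 * (z - v)).
  have := congr1 (horner^~ z) dH.
  by rewrite hornerD hornerN hornerC hornerZ hornerM horner_exp !hornerXsubC.
by split; apply/eqP; rewrite -subr_eq0 Hz subrr ?expr0n !(mul0r, mulr0).
Qed.

Lemma cubic_two_double_roots (F : fieldType) (H : {poly F})
    (b0 b1 c u0 v0 u1 v1 : F) :
  c != 0 -> b0 != b1 ->
  H - b0%:P = c *: (('X - u0%:P) ^+ 2 * ('X - v0%:P)) ->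
  H - b1%:P = c *: (('X - u1%:P) ^+ 2 * ('X - v1%:P)) ->
  3 * u1 - u0 = 2 * v0 /\ H^`() = (3 * c) *: (('X - u0%:P) * ('X - u1%:P)).
Proof.
move=> c_neq0 b01 dH0 dH1.
have [[Hu0 _] [Hu1 _]] := (cubic_fibre_horner dH0, cubic_fibre_horner dH1).
have u01 : u1 - u0 != 0.
  by rewrite subr_eq0; apply: contraNneq b01 => eq_u; rewrite -Hu0 -eq_u Hu1.
have rel : 3 * u1 - u0 = 2 * v0.
  have := congr1 (horner^~ u1)
    (etrans (esym (deriv_cubic_double_root dH0)) (deriv_cubic_double_root dH1)).
  rewrite !(hornerZ, hornerM, hornerD, hornerN, hornerX, hornerC) subrr !mul0r mulr0.
  move/eqP; rewrite !mulf_eq0 (negPf c_neq0) (negPf u01) /= subr_eq0.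
  by move/eqP=> ->; rewrite addrK.
split=> //; rewrite (deriv_cubic_double_root dH0) -rel subrK -!mul_polyC !polyCM.
by move: 'X (3%:P) => X T; ring.
Qed.

Lemma deriv_comp_two_critical_points (R : comNzRingType) (G H : {poly R})
    (a c b0 b1 u0 v0 u1 v1 : R) (t0 t1 : nat) :
  G^`() = a *: (('X - b0%:P) ^+ t0 * ('X - b1%:P) ^+ t1) ->
  H - b0%:P = c *: (('X - u0%:P) ^+ 2 * ('X - v0%:P)) ->
  H - b1%:P = c *: (('X - u1%:P) ^+ 2 * ('X - v1%:P)) ->
  H^`() = (3 * c) *: (('X - u0%:P) * ('X - u1%:P)) ->
  (G \Po H)^`() =
    (3 * a * c ^+ (t0 + t1).+1) *: (('X - u0%:P) ^+ (2 * t0 + 1) * ('X - v0%:P) ^+ t0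
                                * ('X - u1%:P) ^+ (2 * t1 + 1) * ('X - v1%:P) ^+ t1).
Proof.
move=> dG dH0 dH1 dH'.
rewrite deriv_comp dG dH' comp_polyZ rmorphM !rmorphXn !rmorphB /= comp_polyX !comp_polyC.
rewrite dH0 dH1 !exprZn !exprMn !mul2n -!addnn !exprD !expr1 exprS exprD.
rewrite -!mul_polyC !polyCM !polyC_exp.
move: ('X - u0%:P) ('X - v0%:P) ('X - u1%:P) ('X - v1%:P) => U0 V0 U1 V1.
move: (U0 ^+ t0) (V0 ^+ t0) (U1 ^+ t1) (V1 ^+ t1) (c%:P ^+ t0) (c%:P ^+ t1) => A B C D P Q.
ring.
Qed.

Lemma root_deriv_comp_one_point_fibre (F : fieldType) (G H : {poly F})
    (a b c x y : F) (m n : nat) :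
  a != 0 -> c != 0 -> n%:R != 0 :> F ->
  G^`() = a *: ('X - b%:P) ^+ m -> H - b%:P = c *: ('X - x%:P) ^+ n ->
  root (G \Po H)^`() y -> y = x.
Proof.
move=> a_neq0 c_neq0 n_neq0 dG dH.
have dH' : H^`() = c *: (('X - x%:P) ^+ n.-1 *+ n).
  by rewrite -[H^`()]subr0 -(derivC b) -derivB dH derivZ deriv_exp derivXsubC mul1r.
have Hy : H.[y] - b = c * (y - x) ^+ n.
  have := congr1 (horner^~ y) dH.
  by rewrite hornerD hornerN hornerC hornerZ horner_exp hornerXsubC.
rewrite deriv_comp rootM !rootE horner_comp dG dH' !hornerZ hornerMn !horner_exp.
rewrite !hornerXsubC Hy.
rewrite -mulr_natr !mulf_eq0 !expf_eq0 (negPf a_neq0) (negPf c_neq0) (negPf n_neq0) /=.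
by rewrite mulf_eq0 expf_eq0 (negPf c_neq0) subr_eq0; case: eqP => // _; rewrite !andbF.
Qed.

Section Decomposition.

Variables (L : closedFieldType) (G H : {poly L}) (t k : nat).
Hypotheses (char0 : [pchar L] =i pred0) (size_G : size G = t.+1)
  (size_H : size H = k.+1) (t_gt1 : (1 < t)%N) (k_gt2 : (2 < k)%N).
Hypothesis two_critical_points :
  exists y1 y2, [/\ y1 != y2, root (G \Po H)^`() y1 & root (G \Po H)^`() y2].
Hypothesis equal_critical_values :
  forall v, at_most_two [pred y | root (G \Po H)^`() y && ((G \Po H).[y] == v)].

Local Notation a := (lead_coef G^`()).
Local Notation c := (lead_coef H).
(* The repeated part gcd(H - b, (H - b)') of the fibre polynomial, as (H - b)' = H'. *)
Local Notation D b := (gcdp (H - b%:P) H^`()).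

Lemma lead_coef_H_neq0 : c != 0.
Proof. by rewrite lead_coef_eq0 -size_poly_gt0 size_H. Qed.

Lemma critical_fibre_at_most_two b : root G^`() b -> at_most_two (root (H - b%:P)).
Proof.
move=> rb; apply: (at_most_two_sub (@equal_critical_values G.[b])) => y.
rewrite -[_ \in _]/(root _ y) root_subC => /eqP Hy.
rewrite !inE horner_comp Hy eqxx andbT.
by rewrite deriv_comp rootM rootE horner_comp Hy (rootP rb) eqxx.
Qed.

Lemma size_lead_coef_H_subC b : size (H - b%:P) = k.+1 /\ lead_coef (H - b%:P) = c.
Proof.
have size_b : (size (- b%:P) < size H)%N.
  by rewrite size_polyN size_polyC size_H; case: (b != 0); case: k k_gt2.
by rewrite size_polyDl // lead_coefDl.
Qed.

Lemma critical_fibre_factor b : root G^`() b ->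
  exists x0 x1 n0 n1, [/\ x0 != x1, (0 < n0)%N, (n0 + n1 = k)%N &
    H - b%:P = c *: (('X - x0%:P) ^+ n0 * ('X - x1%:P) ^+ n1)].
Proof.
move=> /critical_fibre_at_most_two fib; have [size_Hb lc_Hb] := size_lead_coef_H_subC b.
have size_Hb_gt1 : (1 < size (H - b%:P)%R)%N by rewrite size_Hb ltnS (ltn_trans _ k_gt2).
have [x0 [x1 [n0 [n1 [x01 n0_gt0 n01 dH]]]]] := closed_poly_two_roots size_Hb_gt1 fib.
exists x0, x1, n0, n1; split=> //; first by rewrite n01 size_Hb.
by rewrite [LHS]dH lc_Hb.
Qed.

Lemma size_deriv_H : size H^`() = k.
Proof. by rewrite size_deriv_pchar0 // size_H. Qed.

Lemma deriv_H_neq0 : H^`() != 0.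
Proof. by rewrite -size_poly_eq0 size_deriv_H; case: k k_gt2. Qed.

Lemma size_repeated_part_gt b x0 x1 n0 n1 :
  H - b%:P = c *: (('X - x0%:P) ^+ n0 * ('X - x1%:P) ^+ n1) ->
  (n0.-1 + n1.-1 < size (D b))%N.
Proof.
move=> dH; have := size_gcdp_deriv_XsubC_exp2 _ dH.
by rewrite derivB derivC subr0; apply; exact: lead_coef_H_neq0.
Qed.

Lemma size_repeated_part_ge b : root G^`() b -> (k.-1 <= size (D b))%N.
Proof.
case/critical_fibre_factor=> x0 [x1 [n0 [n1 [_ _ n01 /size_repeated_part_gt]]]].
rewrite -n01; move: (size _) => s; lia.
Qed.

Lemma coprime_repeated_parts b0 b1 : b0 != b1 -> coprimep (D b0) (D b1).
Proof.
move=> /(coprimep_subC H) cop.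
exact: coprimep_dvdr (dvdp_gcdl _ _) (coprimep_dvdl (dvdp_gcdl _ _) cop).
Qed.

Lemma repeated_part_neq0 b : D b != 0.
Proof. by rewrite gcdp_eq0 (negPf deriv_H_neq0) andbF. Qed.

Lemma at_most_two_critical_points_G : at_most_two (root G^`()).
Proof.
move=> x y z rx ry rz; apply/negPn/negP; rewrite !negb_or => /and3P[xy xz yz].
have cop : coprimep (D x * D y) (D z) by rewrite coprimepMl !coprime_repeated_parts.
have dvd_xy : D x * D y %| H^`() by rewrite Gauss_dvdp ?coprime_repeated_parts // !dvdp_gcdr.
have := size_mul_coprime_dvdp deriv_H_neq0 cop dvd_xy (dvdp_gcdr _ _).
rewrite !size_mul ?mulf_neq0 ?repeated_part_neq0 // size_deriv_H.
move: (size_repeated_part_ge rx) (size_repeated_part_ge ry) (size_repeated_part_ge rz).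
move: (size (D x)) (size (D y)) (size (D z)) => sx sy sz; lia.
Qed.

Lemma two_critical_points_G_cubic b0 b1 : b0 != b1 -> root G^`() b0 -> root G^`() b1 ->
  k = 3 /\ exists u v, u != v /\ H - b0%:P = c *: (('X - u%:P) ^+ 2 * ('X - v%:P)).
Proof.
move=> b01 r0 r1.
have := size_mul_coprime_dvdp deriv_H_neq0 (coprime_repeated_parts b01)
  (dvdp_gcdr _ _) (dvdp_gcdr _ _).
rewrite size_mul ?repeated_part_neq0 // size_deriv_H.
have [x0 [x1 [n0 [n1 [x01 n0_gt0 n01 dH]]]]] := critical_fibre_factor r0.
move: (size_repeated_part_gt dH) (size_repeated_part_ge r1).
move: (size (D b0)) (size (D b1)) => s0 s1 s0_ge s1_ge s01.
have k3 : k = 3 by lia.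
split=> //; have [[e0 e1]|[e0 e1]] : (n0 = 2 /\ n1 = 1 \/ n0 = 1 /\ n1 = 2)%N by lia.
  by exists x0, x1; rewrite dH e0 e1.
by exists x1, x0; rewrite eq_sym dH e0 e1 mulrC.
Qed.

Lemma size_deriv_G : size G^`() = t.
Proof. by rewrite size_deriv_pchar0 // size_G. Qed.

Lemma lead_coef_deriv_G_neq0 : a != 0.
Proof. by rewrite lead_coef_eq0 -size_poly_eq0 size_deriv_G; case: t t_gt1. Qed.

Lemma deriv_decomposition_one_critical_point b0 :
  G^`() = a *: ('X - b0%:P) ^+ t.-1 ->
  exists (k0 k1 : nat) (x0 x1 : L),
    [/\ [/\ (1 <= k0)%N, (1 <= k1)%N, (k0 + k1)%N = k & (3 <= k)%N], x0 != x1 &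
        (G \Po H)^`() = (a * c ^+ t) *:
          (('X - x0%:P) ^+ (k0 * t - 1) * ('X - x1%:P) ^+ (k1 * t - 1)
           * (k%:R *: 'X - (k0%:R * x1 + k1%:R * x0)%:P))].
Proof.
move=> dG; have r0 : root G^`() b0.
  have t1_gt0 : (0 < t.-1)%N by rewrite ltn_predRL.
  by rewrite dG rootZ ?lead_coef_deriv_G_neq0 // -(prednK t1_gt0) root_exp_XsubC.
have [x0 [x1 [n0 [n1 [x01 n0_gt0 n01 dH]]]]] := critical_fibre_factor r0.
have [n1_eq0 | n1_gt0] := posnP n1.
  have k_neq0 : k%:R != 0 :> L by rewrite (pcharf0P _).1 // -lt0n (ltn_trans _ k_gt2).
  have dH' : H - b0%:P = c *: ('X - x0%:P) ^+ k by rewrite dH -n01 n1_eq0 expr0 mulr1 addn0.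
  have [y1 [y2 [y12 r1 r2]]] := two_critical_points.
  have := root_deriv_comp_one_point_fibre lead_coef_deriv_G_neq0 lead_coef_H_neq0 k_neq0 dG dH'.
  by move=> single; move: y12; rewrite (single _ r1) (single _ r2) eqxx.
exists n0, n1, x0, x1; split=> //.
by rewrite (deriv_comp_one_critical_point (ltnW t_gt1) n0_gt0 n1_gt0 dG dH) n01.
Qed.

Lemma deriv_decomposition_two_critical_points b0 b1 t0 t1 :
  b0 != b1 -> (0 < t0)%N -> (0 < t1)%N -> (t0 + t1 = t.-1)%N ->
  G^`() = a *: (('X - b0%:P) ^+ t0 * ('X - b1%:P) ^+ t1) ->
  exists (x0 x1 y0 y1 : L),
    [/\ k = 3%N, uniq [:: x0; x1; y0; y1],
        3 * x0 - y0 = 2 * y1 /\ 3 * y0 - x0 = 2 * x1 &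
        (G \Po H)^`() = (3 * a * c ^+ t) *:
          (('X - x0%:P) ^+ (2 * t0 + 1) * ('X - x1%:P) ^+ t0
           * ('X - y0%:P) ^+ (2 * t1 + 1) * ('X - y1%:P) ^+ t1)].
Proof.
move=> b01 t0_gt0 t1_gt0 t01 dG.
have root_b (b : L) n : (0 < n)%N -> root (('X - b%:P) ^+ n) b.
  by move=> n_gt0; rewrite -(prednK n_gt0) root_exp_XsubC.
have r0 : root G^`() b0 by rewrite dG rootZ ?lead_coef_deriv_G_neq0 // rootM root_b.
have r1 : root G^`() b1 by rewrite dG rootZ ?lead_coef_deriv_G_neq0 // rootM orbC root_b.
have [k3 [u0 [v0 [uv0 dH0]]]] := two_critical_points_G_cubic b01 r0 r1.
have b10 : b1 != b0 by rewrite eq_sym.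
have [_ [u1 [v1 [uv1 dH1]]]] := two_critical_points_G_cubic b10 r1 r0.
have [rel1 dH'] := cubic_two_double_roots lead_coef_H_neq0 b01 dH0 dH1.
have [rel0 _] := cubic_two_double_roots lead_coef_H_neq0 b10 dH1 dH0.
have [[Hu0 Hv0] [Hu1 Hv1]] := (cubic_fibre_horner dH0, cubic_fibre_horner dH1).
have fibres_disjoint x y : H.[x] = b0 -> H.[y] = b1 -> x != y.
  by move=> Hx Hy; apply: contraNneq b01 => exy; rewrite -Hx exy Hy.
exists u0, v0, u1, v1; split=> //.
  by rewrite /= !inE !negb_or uv0 uv1 !fibres_disjoint.
have -> : t = (t0 + t1).+1 by rewrite t01 prednK // ltnW.
exact: deriv_comp_two_critical_points dG dH0 dH1 dH'.
Qed.

Lemma deriv_decomposition :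
  (exists (k0 k1 : nat) (x0 x1 : L),
    [/\ [/\ (1 <= k0)%N, (1 <= k1)%N, (k0 + k1)%N = k & (3 <= k)%N], x0 != x1 &
        (G \Po H)^`() = (a * c ^+ t) *:
          (('X - x0%:P) ^+ (k0 * t - 1) * ('X - x1%:P) ^+ (k1 * t - 1)
           * (k%:R *: 'X - (k0%:R * x1 + k1%:R * x0)%:P))])
  \/ (exists (t0 t1 : nat) (x0 x1 y0 y1 : L),
    [/\ [/\ k = 3%N, (1 <= t0)%N, (1 <= t1)%N & (t0 + t1)%N = (t - 1)%N],
        uniq [:: x0; x1; y0; y1],
        3 * x0 - y0 = 2 * y1 /\ 3 * y0 - x0 = 2 * x1 &
        (G \Po H)^`() = (3 * a * c ^+ t) *:
          (('X - x0%:P) ^+ (2 * t0 + 1) * ('X - x1%:P) ^+ t0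
           * ('X - y0%:P) ^+ (2 * t1 + 1) * ('X - y1%:P) ^+ t1)]).
Proof.
have size_G' : (1 < size G^`())%N by rewrite size_deriv_G.
have [b0 [b1 [t0 [t1 [b01 t0_gt0 t01 dG]]]]] :=
  closed_poly_two_roots size_G' at_most_two_critical_points_G.
rewrite size_deriv_G in t01.
have [t1_eq0 | t1_gt0] := posnP t1.
  left; apply: (@deriv_decomposition_one_critical_point b0).
  by rewrite [LHS]dG -t01 t1_eq0 expr0 mulr1 addn0.
right; have [x0 [x1 [y0 [y1 [k3 xy_uniq rels dF]]]]] :=
  deriv_decomposition_two_critical_points b01 t0_gt0 t1_gt0 t01 dG.
by exists t0, t1, x0, x1, y0, y1; rewrite subn1.
Qed.

End Decomposition.

Theorem proposition1p4 (K : fieldType) (L : closedFieldType)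
  (iota : {rmorphism K -> L})
  (hchar : [pchar K] =i pred0)
  (f g h : {poly K})
  (h2crit : exists b1 b2 : L,
      [/\ b1 != b2, critical iota f b1 & critical iota f b2])
  (hnot3 : ~ exists b1 b2 b3 : L,
      [/\ [&& b1 != b2, b1 != b3 & b2 != b3],
          [&& critical iota f b1, critical iota f b2 & critical iota f b3],
          (map_poly iota f).[b1] = (map_poly iota f).[b2] &
          (map_poly iota f).[b1] = (map_poly iota f).[b3]])
  (hcomp : f = g \Po h)
  (t k : nat) (ht : t = (size g).-1) (hk : k = (size h).-1)
  (ht1 : (1 < t)%N) :
  (k <= 2)%N
  \/ (exists (a' : K) (k0 k1 : nat) (x0 x1 : L),
        [/\ [/\ (1 <= k0)%N, (1 <= k1)%N, (k0 + k1)%N = k & (3 <= k)%N], x0 != x1 &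
            map_poly iota f^`() =
              iota a' *: (('X - x0%:P) ^+ (k0 * t - 1) * ('X - x1%:P) ^+ (k1 * t - 1)
                          * (k%:R *: 'X - (k0%:R * x1 + k1%:R * x0)%:P))])
  \/ (exists (a' : K) (t0 t1 : nat) (x0 x1 y0 y1 : L),
        [/\ [/\ k = 3%N, (1 <= t0)%N, (1 <= t1)%N & (t0 + t1)%N = (t - 1)%N],
            uniq [:: x0; x1; y0; y1],
            3 * x0 - y0 = 2 * y1 /\ 3 * y0 - x0 = 2 * x1 &
            map_poly iota f^`() =
              iota a' *: (('X - x0%:P) ^+ (2 * t0 + 1) * ('X - x1%:P) ^+ t0
                          * ('X - y0%:P) ^+ (2 * t1 + 1) * ('X - y1%:P) ^+ t1)]).
Proof.
case/orP: (leqVgt k 2) => [k_le2 | k_gt2]; [by left | right].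
have char0 : [pchar L] =i pred0 by move=> p; rewrite (fmorph_pchar iota) hchar.
have size_G : size (map_poly iota g) = t.+1.
  by rewrite size_map_poly ht prednK //; move: ht1; rewrite ht; case: (size g).
have size_H : size (map_poly iota h) = k.+1.
  by rewrite size_map_poly hk prednK //; move: k_gt2; rewrite hk; case: (size h).
have fF : map_poly iota f = map_poly iota g \Po map_poly iota h by rewrite hcomp map_comp_poly.
have dF : map_poly iota f^`() = (map_poly iota f)^`() by rewrite deriv_map.
rewrite /critical dF fF in h2crit hnot3; rewrite dF fF.
have equal_values v : at_most_two [pred y | root (map_poly iota g \Po map_poly iota h)^`() y
                                  && ((map_poly iota g \Po map_poly iota h).[y] == v)].
  move=> x y z /andP[rx /eqP vx] /andP[ry /eqP vy] /andP[rz /eqP vz].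
  apply/negPn/negP; rewrite !negb_or => dist; apply: hnot3; exists x, y, z.
  by rewrite dist rx ry rz vx vy vz.
have [[k0 [k1 [x0 [x1 [k01 x01 dFe]]]]] | [t0 [t1 [x0 [x1 [y0 [y1 [t01 xy rels dFe]]]]]]]] :=
  deriv_decomposition char0 size_G size_H ht1 k_gt2 h2crit equal_values.
  left; exists (lead_coef g^`() * lead_coef h ^+ t), k0, k1, x0, x1; split=> //.
  by rewrite dFe deriv_map !lead_coef_map rmorphM rmorphXn.
right; exists (3 * lead_coef g^`() * lead_coef h ^+ t), t0, t1, x0, x1, y0, y1; split=> //.
by rewrite dFe deriv_map !lead_coef_map !rmorphM rmorphXn rmorph_nat.
Qed.
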